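(* Let $\phi:X\to Y$ be a continuous surjection from a compact metric space $X$ onto a compact Hausdorff space $Y$. Then $\phi$ is almost one-to-one if and only if $\phi$ is both almost open and weakly almost one-to-one.
   Context: $\phi$ is almost open if $\phi(U)$ has nonempty interior in $Y$ for every nonempty open $U\subset X$. Let $Y_0=\{y\in Y:\phi^{-1}(y)\text{ is a singleton}\}$. $\phi$ is weakly almost one-to-one if $Y_0$ is dense in $Y$, and almost one-to-one if $X_0=\phi^{-1}(Y_0)$ is dense in $X$. *)

From HB Require Import structures.
From mathcomp Require Import all_boot all_order all_algebra.
From mathcomp Require Import all_classical all_reals all_analysis.
Set Implicit Arguments. Unset Strict Implicit. Unset Printing Implicit Defensive.
Import Order.TTheory GRing.Theory Num.Theory.
Local Open Scope classical_set_scope.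

Definition almost_open (X Y : topologicalType) (phi : X -> Y) : Prop :=
  forall U : set X, open U -> U !=set0 -> (interior (phi @` U)) !=set0.

Definition singleton_fibres (X Y : topologicalType) (phi : X -> Y) : set Y :=
  [set y | exists x : X, phi @^-1` [set y] = [set x]].

Definition weakly_almost_one_to_one (X Y : topologicalType) (phi : X -> Y) : Prop :=
  dense (singleton_fibres phi).

Definition almost_one_to_one (X Y : topologicalType) (phi : X -> Y) : Prop :=
  dense (phi @^-1` singleton_fibres phi).

From HB Require Import structures.
From mathcomp Require Import all_boot all_order all_algebra.
From mathcomp Require Import all_classical all_reals all_analysis.
Set Implicit Arguments. Unset Strict Implicit. Unset Printing Implicit Defensive.
Local Open Scope classical_set_scope.

(* A continuous map from a compact space to a Hausdorff space is closed, so for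
   open U the set ~` (phi @` ~` U) is open; for a surjection it lies inside
   phi @` U, and it contains phi x as soon as x is in U and is the only point
   of its fibre.  Conversely, the interior of phi @` U meets the dense set of
   singleton fibres, and a point of phi @` U in it pulls back to U.  *)

Lemma singleton_fibresE (X Y : topologicalType) (phi : X -> Y) (x : X) :
  singleton_fibres phi (phi x) -> phi @^-1` [set phi x] = [set x].
Proof.
move=> [x0 fibre]; rewrite fibre; congr [set _].
by have : (phi @^-1` [set phi x]) x by []; rewrite fibre.
Qed.

Lemma dense_preimage_dense (X Y : topologicalType) (f : X -> Y) (S : set Y) :
  continuous f -> (forall y, exists x, f x = y) ->
  dense (f @^-1` S) -> dense S.
Proof.
move=> cf surj dS O [y Oy] oO.
have [x fxy] := surj y.
have Ofx : (f @^-1` O) x by rewrite /= fxy.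
have [z [Ofz Sfz]] := dS _ (ex_intro _ x Ofx) (open_comp (fun t _ => cf t) oO).
by exists (f z).
Qed.

Lemma almost_open_dense_preimage (X Y : topologicalType) (f : X -> Y)
    (S : set Y) :
  almost_open f -> dense S -> dense (f @^-1` S).
Proof.
move=> aof dS U U0 oU.
have [y [intUy Sy]] := dS _ (aof U oU U0) (@open_interior _ _).
have [u Uu fuy] : (f @` U) y by exact: interior_subset.
by exists u; split; rewrite //= fuy.
Qed.

Section CompactToHausdorff.
Variables (X Y : topologicalType) (phi : X -> Y).
Hypotheses (cX : compact [set: X]) (hY : hausdorff_space Y)
  (cphi : continuous phi).

Lemma closed_image_of_compact (A : set X) : closed A -> closed (phi @` A).
Proof.
move=> cA; apply: (compact_closed hY); apply: continuous_compact.
  exact: continuous_subspaceT.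
exact: subclosed_compact cA cX _.
Qed.

Lemma open_setC_image_setC (U : set X) : open U -> open (~` (phi @` ~` U)).
Proof. by move=> oU; apply/closed_openC/closed_image_of_compact/open_closedC. Qed.

End CompactToHausdorff.

Lemma setC_image_setC_sub (X Y : Type) (phi : X -> Y) (U : set X) :
  (forall y, exists x, phi x = y) -> ~` (phi @` ~` U) `<=` phi @` U.
Proof.
move=> surj y nCy; have [z zy] := surj y.
by exists z => //; apply: contrapT => nUz; apply: nCy; exists z.
Qed.

Lemma setC_image_setC_singleton_fibre (X Y : Type) (phi : X -> Y)
    (U : set X) (x : X) :
  phi @^-1` [set phi x] = [set x] -> U x -> (~` (phi @` ~` U)) (phi x).
Proof.
move=> fibre Ux [z nUz zx]; apply: nUz.
by have : (phi @^-1` [set phi x]) z by []; rewrite fibre => ->.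
Qed.

Lemma almost_one_to_one_almost_open (X Y : topologicalType) (phi : X -> Y) :
  compact [set: X] -> hausdorff_space Y -> continuous phi ->
  (forall y, exists x, phi x = y) ->
  almost_one_to_one phi -> almost_open phi.
Proof.
move=> cX hY cphi surj ao U oU U0.
have [x [Ux /singleton_fibresE fibre]] := ao U U0 oU.
have sub : ~` (phi @` ~` U) `<=` (phi @` U)°.
  rewrite -(open_subsetE _ (open_setC_image_setC cX hY cphi oU)).
  exact: setC_image_setC_sub.
exists (phi x); apply: sub.
exact: (setC_image_setC_singleton_fibre fibre Ux).
Qed.

Theorem proposition2p3 (R : realType) (X : pseudoMetricType R) (Y : topologicalType)
  (phi : X -> Y) :
  hausdorff_space X -> compact [set: X] ->
  hausdorff_space Y -> compact [set: Y] ->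
  continuous phi -> (forall y : Y, exists x : X, phi x = y) ->
  almost_one_to_one phi <-> (almost_open phi /\ weakly_almost_one_to_one phi).
Proof.
move=> _ cX hY _ cphi surj; split.
- move=> ao; split; first exact: almost_one_to_one_almost_open.
  exact: dense_preimage_dense ao.
- by move=> [aop wao]; exact: almost_open_dense_preimage.
Qed.
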